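(* Let $G=\mathbb{Z}_2\times\mathbb{Z}_4$ and let $\theta_1,\theta_2$ be normalised orthomorphisms of $G$ with $|A_{44}\cap A'_{44}|=2$. Then $\theta_1$ and $\theta_2$ are not orthogonal.
   Context: $G$ is written multiplicatively with identity $e$; $o(g)$ is the order of $g$. A normalised orthomorphism of $G$ is a bijection $\theta\colon G\to G$ with $\theta(e)=e$ such that $x\mapsto x^{-1}\theta(x)$ is a bijection of $G$. Two orthomorphisms are orthogonal if $x\mapsto\theta_1(x)^{-1}\theta_2(x)$ is a bijection of $G$. $A_{44}=\{x: o(x)=4, o(\theta_1(x))=4\}$ and $A'_{44}=\{x: o(x)=4, o(\theta_2(x))=4\}$. *)

From mathcomp Require Import all_boot all_fingroup zmodp.
Set Implicit Arguments. Unset Strict Implicit. Unset Printing Implicit Defensive.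
Local Open Scope group_scope.

(* G = Z_2 x Z_4, as the external direct product of the (additive, cyclic)
   groups 'Z_2 and 'Z_4, with its canonical finGroupType structure
   (gproduct.v); group law written multiplicatively, identity 1. *)
Definition G : finGroupType := ('Z_2 * 'Z_4)%type.

Definition normalised_orthomorphism (gT : finGroupType) (th : gT -> gT) : Prop :=
  [/\ bijective th, th 1 = 1 & bijective (fun x => x^-1 * th x)].

Definition orthogonal_orth (gT : finGroupType) (th1 th2 : gT -> gT) : Prop :=
  bijective (fun x => (th1 x)^-1 * th2 x).

Definition A44 (gT : finGroupType) (th : gT -> gT) : {set gT} :=
  [set x | (#[x] == 4)%N && (#[th x] == 4)%N].

From mathcomp Require Import all_boot all_fingroup zmodp cyclic.
Set Implicit Arguments. Unset Strict Implicit. Unset Printing Implicit Defensive.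
Local Open Scope group_scope.

(* Proof strategy.  The group G = Z_2 x Z_4 has only 8 elements, so the
   statement is settled by an exhaustive but *pruned* search over all
   normalised orthomorphisms of G.

   Fix an enumeration e of a finite group.  An orthomorphism th is recorded
   by its graph, the sequence [seq th x | x <- e].  Every prefix of such a
   graph is a "partial orthomorphism": its entries are pairwise distinct,
   and so are the quotients x^-1 * th x.  Extending partial orthomorphisms
   one entry at a time ([extensions]) therefore produces a list of
   candidates that contains the graph of every orthomorphism; keeping those
   that fix 1 gives [orth_graphs]. *)

(* An element has order 4 iff its 4th power is trivial but its square is
   not; unlike #[x], this test is cheap to evaluate. *)
Definition order4 (gT : finGroupType) (x : gT) : bool :=
  (x ^+ 4 == 1) && (x ^+ 2 != 1).

Lemma order4E (gT : finGroupType) (x : gT) : (#[x] == 4)%N = order4 x.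
Proof.
rewrite /order4 -!order_dvdn; have := order_gt0 x.
by case: #[x] => [|[|[|[|[|n]]]]].
Qed.

Lemma zip_take_r (S T : Type) (s : seq S) (t : seq T) k :
  zip s (take k t) = take k (zip s t).
Proof.
by elim: s t k => [|x s IHs] [|y t] [|k] //=; rewrite IHs.
Qed.

Section OrthomorphismSearch.

Variables (gT : finGroupType) (e : seq gT).

(* [s] lists candidate images th x for the first [size s] elements x of e;
   it is a partial orthomorphism if th and x |-> x^-1 * th x are injective
   on the part already listed. *)
Definition partial_orth (s : seq gT) : bool :=
  uniq s && uniq [seq p.1^-1 * p.2 | p <- zip e s].

Fixpoint extensions (n : nat) : seq (seq gT) :=
  if n is n'.+1 then
    [seq s <- [seq rcons s y | s <- extensions n', y <- e] | partial_orth s]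
  else [:: [::]].

Definition graph (th : gT -> gT) : seq gT := [seq th x | x <- e].
Definition eval_graph (s : seq gT) (x : gT) : gT := nth 1 s (index x e).

Definition orth_graphs : seq (seq gT) :=
  [seq s <- extensions (size e) | eval_graph s 1 == 1].

Definition common_A44_count (s1 s2 : seq gT) : nat :=
  count (fun x => [&& order4 x, order4 (eval_graph s1 x) &
                      order4 (eval_graph s2 x)]) e.

Definition orthogonal_graphs (s1 s2 : seq gT) : bool :=
  uniq [seq (eval_graph s1 x)^-1 * eval_graph s2 x | x <- e].

(* The decision procedure: no two candidate graphs with exactly n common
   A44 elements are orthogonal.  The candidate list is let-bound so that it
   is computed only once. *)
Definition no_orthogonal_pair (n : nat) : bool :=
  let L := orth_graphs in
  all (fun s1 => all (fun s2 =>
         (common_A44_count s1 s2 == n) ==> ~~ orthogonal_graphs s1 s2) L) L.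

Hypotheses (e_uniq : uniq e) (mem_e : forall x, x \in e).

Lemma mem_extensions (s : seq gT) :
  (forall k, partial_orth (take k s)) -> s \in extensions (size s).
Proof.
elim/last_ind: s => [|s y IHs] prefix_ok; first by rewrite inE.
rewrite size_rcons mem_filter.
have := prefix_ok (size (rcons s y)); rewrite take_size => -> /=.
apply/allpairsP; exists (s, y); split=> //.
apply: IHs => k; have [le_k_s | lt_s_k] := leqP k (size s).
  by have := prefix_ok k; rewrite -cats1 takel_cat.
by rewrite take_oversize ?(ltnW lt_s_k) //; have := prefix_ok (size s);
  rewrite -cats1 take_size_cat.
Qed.

Lemma eval_graphE (th : gT -> gT) x : eval_graph (graph th) x = th x.
Proof. by rewrite /eval_graph (nth_map 1) ?index_mem // nth_index. Qed.

Lemma partial_orth_graph (th : gT -> gT) :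
  bijective th -> bijective (fun x => x^-1 * th x) ->
  forall k, partial_orth (take k (graph th)).
Proof.
move=> /bij_inj th_inj /bij_inj quot_inj k; apply/andP; split.
  by rewrite take_uniq // map_inj_uniq.
rewrite zip_take_r.
have -> : zip e (graph th) = [seq (x, th x) | x <- e].
  by rewrite -{1}(map_id e) zip_map.
by rewrite map_take -map_comp take_uniq // map_inj_uniq.
Qed.

Lemma graph_in_orth_graphs (th : gT -> gT) :
  normalised_orthomorphism th -> graph th \in orth_graphs.
Proof.
case=> th_bij th1 quot_bij; rewrite mem_filter eval_graphE th1 eqxx /=.
have := mem_extensions (partial_orth_graph th_bij quot_bij).
by rewrite size_map.
Qed.

Lemma common_A44_countE (th1 th2 : gT -> gT) :
  #|A44 th1 :&: A44 th2| = common_A44_count (graph th1) (graph th2).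
Proof.
rewrite /common_A44_count -size_filter -(card_uniqP _) ?filter_uniq //.
apply: eq_card => x; rewrite !inE mem_filter mem_e andbT !eval_graphE !order4E.
by case: (order4 x); rewrite ?andbT.
Qed.

Lemma orthogonal_graphsE (th1 th2 : gT -> gT) :
  orthogonal_orth th1 th2 -> orthogonal_graphs (graph th1) (graph th2).
Proof.
move=> /bij_inj quot_inj; rewrite /orthogonal_graphs.
under eq_map do rewrite !eval_graphE.
by rewrite map_inj_uniq.
Qed.

Lemma no_orthogonal_pairP n (th1 th2 : gT -> gT) :
  no_orthogonal_pair n ->
  normalised_orthomorphism th1 -> normalised_orthomorphism th2 ->
  #|A44 th1 :&: A44 th2| = n -> ~ orthogonal_orth th1 th2.
Proof.
move=> /allP/(_ _ (graph_in_orth_graphs _)) checked orth1 orth2 n_common.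
move=> /orthogonal_graphsE orthogonal.
have /allP/(_ _ (graph_in_orth_graphs orth2)) := checked _ orth1.
by rewrite -common_A44_countE n_common eqxx orthogonal.
Qed.

End OrthomorphismSearch.

(* An explicit enumeration of G = Z_2 x Z_4; unlike the canonical [enum G],
   whose definition is blocked by opaque proofs, it reduces under vm_compute. *)
Definition enumG : seq G :=
  [seq (inZp i : 'Z_2, inZp j : 'Z_4) | i <- iota 0 2, j <- iota 0 4].

Lemma enumG_uniq : uniq enumG. Proof. by vm_compute. Qed.

Lemma mem_enumG (x : G) : x \in enumG.
Proof.
case: x => a b; apply/allpairsP; exists (val a, val b).
by rewrite !mem_iota /= !valZpK (ltn_ord a) (ltn_ord b).
Qed.

Theorem proposition2 (th1 th2 : G -> G) :
  normalised_orthomorphism th1 ->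
  normalised_orthomorphism th2 ->
  #|A44 th1 :&: A44 th2| = 2 ->
  ~ orthogonal_orth th1 th2.
Proof.
apply: (no_orthogonal_pairP enumG_uniq mem_enumG).
(* 48 candidate graphs, hence 48^2 pairs to inspect. *)
by vm_compute.
Qed.
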